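(* Let $H$ be a digraph and $u,v\in V(H)$ with $d(u,v)=n$ in $H$, where $n\ge 4$. Let $Q=x_0x_1\ldots x_n$ be a shortest $(u,v)$-path in $H$. If $H[V(Q)]$ is a semicomplete digraph, then for any $x_i,x_j\in V(Q)$ with $0\le i<j\le n$ and any $p\in\{2,3,\ldots,n-1\}$, there exists a path of length $p$ from $x_j$ to $x_i$ in $H[V(Q)]$.
   Context: Digraphs are finite, without loops or multiple arcs. $d(u,v)$ is the length of a shortest $(u,v)$-path. $H[S]$ denotes the subdigraph induced by $S$. A semicomplete digraph is one in which every two distinct vertices $x,y$ are adjacent, i.e. $xy$ or $yx$ is an arc. *)

From mathcomp Require Import all_boot.
Set Implicit Arguments. Unset Strict Implicit. Unset Printing Implicit Defensive.

(* A digraph on a finite vertex type T is an arc relation e : rel T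
   (irreflexive = no loops; a relation has no multiple arcs). *)

(* [dpath_from e u v p] : the sequence u :: p is a (u,v)-path in the digraph e,
   i.e. its vertices are pairwise distinct, consecutive vertices are joined by
   arcs, and it ends at v.  Its length is [size p]. *)
Definition dpath_from (T : eqType) (e : rel T) (u v : T) (p : seq T) : bool :=
  [&& uniq (u :: p), path e u p & last u p == v].

Definition dist_is (T : eqType) (e : rel T) (u v : T) (n : nat) : Prop :=
  (exists p, dpath_from e u v p /\ size p = n) /\
  (forall p, dpath_from e u v p -> n <= size p).

Definition induced (T : eqType) (e : rel T) (S : pred T) : rel T :=
  fun x y => [&& S x, S y & e x y].

Definition semicomplete_on (T : eqType) (e : rel T) (S : pred T) : Prop :=
  forall x y, S x -> S y -> x != y -> e x y || e y x.

From mathcomp Require Import all_boot zify.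

Set Implicit Arguments.
Unset Strict Implicit.
Unset Printing Implicit Defensive.

(* Since Q = x_0 ... x_n is a shortest path, H has no arc x_b x_a with
   a >= b + 2; as H[V(Q)] is semicomplete, it therefore has every backward arc
   x_a x_b with b <= a - 2.  Hence H[V(Q)] contains a copy of the digraph on
   the indices 0..n with the forward arcs a -> a + 1 and these backward arcs,
   and it suffices to find a path of length p from j to i there: run forward
   from j, jump back to some k <= i and run forward to i; when p is too long
   for this, run forward from j up to n, jump back into the gap between i and
   j, run forward inside the gap, jump back to 0 and run forward to i. *)

Lemma dpath_from_map_in (T1 T2 : eqType) (e1 : rel T1) (e2 : rel T2)
    (D : pred T1) (f : T1 -> T2) (u v : T1) (p : seq T1) :
  all D (u :: p) -> {in D &, injective f} ->
  {in D &, forall x y, e1 x y -> e2 (f x) (f y)} ->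
  dpath_from e1 u v p -> dpath_from e2 (f u) (f v) (map f p).
Proof.
move=> Dp injf homf /and3P [up ep /eqP <-]; apply/and3P; split.
- by rewrite -map_cons map_inj_in_uniq //; apply: sub_in2 injf => x /(allP Dp).
- by rewrite path_map; apply: (sub_in_path _ Dp ep) => x y Dx Dy /homf; apply.
- by rewrite last_map.
Qed.

Definition index_arc (a b : nat) : bool := (b == a.+1) || (b.+2 <= a).

Lemma path_index_arc_iota (a m : nat) : path index_arc a (iota a.+1 m).
Proof. by elim: m a => [|m IH] a //=; rewrite /index_arc eqxx IH. Qed.

Lemma last_iota (a m : nat) : last a (iota a.+1 m) = a + m.
Proof. by elim: m a => [|m IH] a /=; rewrite ?addn0 ?IH ?addSnnS. Qed.

Lemma index_dpath_iota (a c : nat) :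
  a <= c -> dpath_from index_arc a c (iota a.+1 (c - a)).
Proof.
move=> ac; apply/and3P; split; last by rewrite last_iota subnKC.
- by rewrite -[_ :: _]/(iota a (c - a).+1) iota_uniq.
- exact: path_index_arc_iota.
Qed.

Lemma index_dpath_cat_iota (x y : nat) (s : seq nat) (b c : nat) :
  dpath_from index_arc x y s -> c < x -> all (fun t => c < t) s ->
  b.+2 <= y -> b <= c ->
  dpath_from index_arc x c (s ++ iota b (c - b).+1).
Proof.
move=> /and3P [us ps /eqP ly] cx cs yb bc.
apply/and3P; split.
- rewrite -cat_cons cat_uniq us iota_uniq andbT; apply/hasPn => t.
  rewrite mem_iota inE negb_or => /andP [_ tc]; apply/andP; split.
  + by apply/eqP; lia.
  + by apply/negP => /(allP cs); lia.
- by rewrite cat_path ps ly /= {1}/index_arc yb orbT path_index_arc_iota.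
- by rewrite last_cat ly /= last_iota subnKC.
Qed.

Lemma index_dpath_exists (n i j p : nat) :
  4 <= n -> i < j -> j <= n -> 2 <= p -> p <= n - 1 ->
  exists s, [/\ dpath_from index_arc j i s, all (fun t => t <= n) s
              & size s = p].
Proof.
move=> n4 ij jn p2 pn.
have iota_above b m c : c < b -> all (fun t => c < t) (iota b m).
  by move=> cb; apply/allP => t; rewrite mem_iota; lia.
have iota_below b m : b + m <= n.+1 -> all (fun t => t <= n) (iota b m).
  by move=> bm; apply/allP => t; rewrite mem_iota; lia.
case: (leqP p (i + (n - j)).+1) => hp.
- (* forward p - 1 - g steps from j, back to k = i - g and forward to i, where
     g = minn i p.-1; such paths have length at most i + (n - j) + 1 *)
  pose k := i - minn i p.-1; pose c := j + (p.-1 - minn i p.-1).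
  exists (iota j.+1 (c - j) ++ iota k (i - k).+1); split.
  + by apply: (index_dpath_cat_iota (index_dpath_iota _) ij); rewrite ?iota_above //; lia.
  + by rewrite all_cat !iota_below //; lia.
  + by rewrite size_cat !size_iota; lia.
- (* the middle run a..a+l lies strictly between i and j, and a + l >= 2 makes
     the jump from a + l to 0 a backward arc *)
  pose l := p - (i + (n - j)).+2; pose a := maxn i.+1 (2 - l).
  have run_ja : dpath_from index_arc j (a + l) (iota j.+1 (n - j) ++ iota a l.+1).
    rewrite -[in iota a _](addKn a l).
    by apply: (index_dpath_cat_iota (index_dpath_iota jn)); rewrite ?iota_above //; lia.
  exists (iota j.+1 (n - j) ++ iota a l.+1 ++ iota 0 i.+1); split.
  + rewrite catA -[in iota 0 _](subn0 i).
    by apply: (index_dpath_cat_iota run_ja ij); rewrite ?all_cat ?iota_above //; lia.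
  + by rewrite !all_cat !iota_below //; lia.
  + by rewrite !size_cat !size_iota; lia.
Qed.

Lemma last_take (T : Type) (x0 : T) (s : seq T) (k : nat) :
  k <= size s -> last x0 (take k s) = nth x0 (x0 :: s) k.
Proof.
elim: s x0 k => [|y s IH] x0 [|k] //= hk.
by rewrite IH // (set_nth_default x0).
Qed.

Lemma dpath_from_shortcut (T : eqType) (e : rel T) (u v : T) (q : seq T) (a b : nat) :
  dpath_from e u v q -> b < a -> a <= size q ->
  e (nth u (u :: q) b) (nth u (u :: q) a) ->
  dpath_from e u v (take b q ++ drop a.-1 q).
Proof.
move=> /and3P [uq pq /eqP lq] ba aq eba.
have drop_a : drop a.-1 q = nth u (u :: q) a :: drop a q.
  by case: a ba aq {eba} => [|a] //= _ aq; rewrite (drop_nth u).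
have last_b : last u (take b q) = nth u (u :: q) b by rewrite last_take //; lia.
have path_a : path e (nth u (u :: q) a) (drop a q).
  by move: pq; rewrite -{1}(cat_take_drop a q) cat_path last_take // => /andP [].
have last_a : last (nth u (u :: q) a) (drop a q) = v.
  by rewrite -lq -[in RHS](cat_take_drop a q) last_cat last_take.
apply/and3P; split.
- apply: subseq_uniq uq; rewrite /= eqxx -[X in subseq _ X](cat_take_drop b q).
  apply: cat_subseq => //.
  by rewrite -(subnK (_ : b <= a.-1)) -?drop_drop ?drop_subseq //; lia.
- by rewrite cat_path take_path //= last_b drop_a /= eba path_a.
- by rewrite last_cat last_b drop_a /= last_a.
Qed.

Section ShortestPath.

Variables (T : eqType) (e : rel T) (u v : T) (n : nat) (q : seq T).
Hypotheses (hd : dist_is e u v n) (hQ : dpath_from e u v q) (hsz : size q = n).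
Hypothesis hsc : semicomplete_on e (fun y => y \in u :: q).

Local Notation x := (nth u (u :: q)).

Lemma shortest_path_no_shortcut (a b : nat) :
  b.+2 <= a -> a <= n -> ~~ e (x b) (x a).
Proof.
move=> ba an; apply/negP => eba.
have aq : a <= size q by rewrite hsz.
have := hd.2 _ (dpath_from_shortcut hQ (ltnW ba) aq eba).
by rewrite size_cat size_take size_drop hsz; case: ifP; lia.
Qed.

Lemma mem_nth_path (t : nat) : t <= n -> x t \in u :: q.
Proof. by move=> tn; apply: mem_nth; rewrite /= hsz ltnS. Qed.

Lemma nth_path_inj : {in (fun t => t <= n) &, injective x}.
Proof.
move=> a b an bn /eqP; have /and3P [uq _ _] := hQ.
by rewrite nth_uniq /= ?hsz ?ltnS // => /eqP.
Qed.

Lemma shortest_path_backward_arc (a b : nat) :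
  b.+2 <= a -> a <= n -> e (x a) (x b).
Proof.
move=> ba an.
have bn : b <= n by lia.
have x_neq : x a != x b by apply/eqP => /nth_path_inj; lia.
have /orP [//|eba] := hsc (mem_nth_path an) (mem_nth_path bn) x_neq.
by rewrite (negbTE (shortest_path_no_shortcut ba an)) in eba.
Qed.

Lemma shortest_path_index_arc :
  {in (fun t => t <= n) &, forall a b,
    index_arc a b -> induced e (fun y => y \in u :: q) (x a) (x b)}.
Proof.
move=> a b an bn ab; rewrite /induced !mem_nth_path //=.
case/orP: ab => [/eqP b_succ | ba]; last exact: shortest_path_backward_arc.
have /and3P [_ /(pathP u) pq _] := hQ.
by rewrite b_succ; apply: pq; rewrite hsz -b_succ.
Qed.

End ShortestPath.

(* Q = x_0 x_1 ... x_n is represented as u :: q, x_i = nth u (u :: q) i. *)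
Theorem lemma2p6 (T : finType) (e : rel T) (e_irr : irreflexive e)
  (u v : T) (n : nat) (n_ge4 : 4 <= n) (hd : dist_is e u v n)
  (q : seq T) (hQ : dpath_from e u v q) (hsz : size q = n)
  (hsc : semicomplete_on e (fun y => y \in u :: q)) :
  forall i j p, i < j -> j <= n -> 2 <= p -> p <= n - 1 ->
    exists r, dpath_from (induced e (fun y => y \in u :: q))
                         (nth u (u :: q) j) (nth u (u :: q) i) r
              /\ size r = p.
Proof.
move=> i j p ij jn p2 pn.
have [s [path_s bounded_s size_s]] := index_dpath_exists n_ge4 ij jn p2 pn.
exists (map (nth u (u :: q)) s); split; last by rewrite size_map.
apply: (dpath_from_map_in _ (nth_path_inj hQ hsz)
                           (shortest_path_index_arc hd hQ hsz hsc) path_s).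
by rewrite /= jn.
Qed.
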